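(* Let $\beta=\gamma=\eta=1$. Let Assumptions A1, A2 and A3 hold with $\varepsilon_0=\varepsilon\le1$. Let $T\in\mathbb{N}$ satisfy $T\le\frac{1}{2\varepsilon^2}$, and let $R\ge2\|r_0\|(\sqrt T+2\varepsilon T^2)$. Then for all $\tau\le T$: $$\|\theta_\tau-\theta_0\|\le\tfrac R2,\qquad \|\tilde r_\tau-r_\tau\|\le4\varepsilon\tau\|r_0\|,\qquad \|\tilde\theta_\tau-\theta_\tau\|\le2\varepsilon\tau^2\|r_0\|.$$
   Context: Norms: $\|\cdot\|$ is the Euclidean norm for vectors and the spectral norm for matrices. Setting. Let $f:\mathbb{R}^N\to\mathbb{R}^n$ be continuously differentiable with Jacobian $\mathcal{J}(\theta)\in\mathbb{R}^{n\times N}$. Let $A\in\mathbb{R}^{m\times n}$ and let $\gamma\ge\|A\|$. Fix $y\in\mathbb{R}^m$, a starting point $\theta_0\in\mathbb{R}^N$, and a fixed deterministic ''reference Jacobian'' $J\in\mathbb{R}^{n\times N}$. Iterations. Gradient descent with step size $\eta>0$ is applied to $\mathcal{L}(\theta)=\frac12\|Af(\theta)-y\|^2$ and to $\mathcal{L}_{\rm lin}(\theta)=\frac12\|Af(\theta_0)+AJ(\theta-\theta_0)-y\|^2$, both started at $\theta_0=\tilde\theta_0$: $$\theta_{\tau+1}=\theta_\tau-\eta\mathcal{J}(\theta_\tau)^\top A^\top r_\tau,\qquad r_\tau:=Af(\theta_\tau)-y,$$ $$\tilde\theta_{\tau+1}=\tilde\theta_\tau-\eta J^\top A^\top\tilde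 r_\tau,\qquad \tilde r_\tau:=Af(\theta_0)+AJ(\tilde\theta_\tau-\theta_0)-y.$$ Assumption A1: there is $\beta>0$ with $\|J\|\le\beta$ and $\|\mathcal{J}(\theta)\|\le\beta$ for all $\theta\in\mathbb{R}^N$. Assumption A2: there is $\varepsilon_0>0$ with $\|\mathcal{J}(\theta_0)-J\|\le\varepsilon_0$ and $\|\mathcal{J}(\theta_0)\mathcal{J}(\theta_0)^\top-JJ^\top\|\le\varepsilon_0^2$. Assumption A3: there are $\varepsilon>0$ and $R>0$ with $\|\mathcal{J}(\theta)-\mathcal{J}(\theta_0)\|\le\varepsilon/2$ for all $\theta$ satisfying $\|\theta-\theta_0\|\le R$. *)

From HB Require Import structures.
From mathcomp Require Import all_boot all_order all_algebra.
From mathcomp Require Import all_classical all_reals all_analysis.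
Set Implicit Arguments. Unset Strict Implicit. Unset Printing Implicit Defensive.
Import Order.TTheory GRing.Theory Num.Theory.
Import numFieldNormedType.Exports.
Local Open Scope classical_set_scope.
Local Open Scope ring_scope.

Definition enorm (R : realType) (k : nat) (v : 'cV[R]_k) : R :=
  Num.sqrt (\sum_(i < k) v i 0 ^+ 2).

Definition specnorm (R : realType) (p q : nat) (M : 'M[R]_(p, q)) : R :=
  sup [set enorm (M *m v) | v in [set v : 'cV[R]_q | enorm v <= 1]].

Definition resid (R : realType) (N n m : nat) (f : 'cV[R]_N -> 'cV[R]_n)
  (A : 'M[R]_(m, n)) (y : 'cV[R]_m) (th : 'cV[R]_N) : 'cV[R]_m :=
  A *m f th - y.

(* gradient descent on L(theta) = 1/2 |A f(theta) - y|^2 *)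
Fixpoint gd_iter (R : realType) (N n m : nat) (f : 'cV[R]_N -> 'cV[R]_n)
  (Jf : 'cV[R]_N -> 'M[R]_(n, N)) (A : 'M[R]_(m, n)) (y : 'cV[R]_m)
  (eta : R) (th0 : 'cV[R]_N) (t : nat) : 'cV[R]_N :=
  match t with
  | 0 => th0
  | t'.+1 => let th := gd_iter f Jf A y eta th0 t' in
             th - eta *: ((Jf th)^T *m A^T *m resid f A y th)
  end.

Definition resid_lin (R : realType) (N n m : nat) (f : 'cV[R]_N -> 'cV[R]_n)
  (J : 'M[R]_(n, N)) (A : 'M[R]_(m, n)) (y : 'cV[R]_m) (th0 th : 'cV[R]_N)
  : 'cV[R]_m :=
  A *m f th0 + A *m (J *m (th - th0)) - y.

Fixpoint gd_lin_iter (R : realType) (N n m : nat) (f : 'cV[R]_N -> 'cV[R]_n)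
  (J : 'M[R]_(n, N)) (A : 'M[R]_(m, n)) (y : 'cV[R]_m)
  (eta : R) (th0 : 'cV[R]_N) (t : nat) : 'cV[R]_N :=
  match t with
  | 0 => th0
  | t'.+1 => let th := gd_lin_iter f J A y eta th0 t' in
             th - eta *: (J^T *m A^T *m resid_lin f J A y th0 th)
  end.

From HB Require Import structures.
From mathcomp Require Import all_boot all_order all_algebra.
From mathcomp Require Import all_classical all_reals all_analysis.
From mathcomp Require Import ring lra.
Set Implicit Arguments. Unset Strict Implicit. Unset Printing Implicit Defensive.
Import Order.TTheory GRing.Theory Num.Theory.
Import numFieldNormedType.Exports.
Local Open Scope classical_set_scope.
Local Open Scope ring_scope.

(* Write z_s = (A Jf(th_s))^T r_s, so that th_(s+1) = th_s - z_s.  Inside the ball of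
   radius R the mean value inequality gives |r_(s+1)|^2 <= |r_s|^2 - |z_s|^2 + 2 eps |r_s| |z_s|.
   Hence |r_s|^2 grows at most by the factor 1 + eps^2 per step and stays below (16/9)|r_0|^2
   as long as s eps^2 <= 1/2, while the same inequality telescopes to
   sum_(i<s) |z_i|^2 <= |r_0|^2 (1 + 4 eps s).  Cauchy-Schwarz then bounds
   |th_s - th_0| <= sum_(i<s) |z_i| by R/2, which keeps the iterates in the ball.  Comparing one
   step of both iterations, the Jacobian mismatches are of size eps, so the residual gap grows by
   at most 3 eps |r_s| <= 4 eps |r_0| and the parameter gap by 2 eps (2s+1) |r_0| per step. *)

Section EuclideanNorm.
Variable R : realType.

Definition dot k (u v : 'cV[R]_k) : R := \sum_(i < k) u i 0 * v i 0.

Lemma dotC k (u v : 'cV[R]_k) : dot u v = dot v u.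
Proof. by apply: eq_bigr => i _; rewrite mulrC. Qed.

Lemma dotDr k (u v w : 'cV[R]_k) : dot u (v + w) = dot u v + dot u w.
Proof. by rewrite /dot -big_split; apply: eq_bigr => i _; rewrite mxE mulrDr. Qed.

Lemma dotNr k (u v : 'cV[R]_k) : dot u (- v) = - dot u v.
Proof. by rewrite /dot -sumrN; apply: eq_bigr => i _; rewrite mxE mulrN. Qed.

Lemma dotBr k (u v w : 'cV[R]_k) : dot u (v - w) = dot u v - dot u w.
Proof. by rewrite dotDr dotNr. Qed.

Lemma dotZr k a (u v : 'cV[R]_k) : dot u (a *: v) = a * dot u v.
Proof. by rewrite /dot mulr_sumr; apply: eq_bigr => i _; rewrite mxE mulrCA. Qed.

Lemma dot0r k (u : 'cV[R]_k) : dot u 0 = 0.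
Proof. by rewrite -(scale0r 0) dotZr mul0r. Qed.

Lemma dotDl k (u v w : 'cV[R]_k) : dot (v + w) u = dot v u + dot w u.
Proof. by rewrite dotC dotDr !(dotC u). Qed.

Lemma dotNl k (u v : 'cV[R]_k) : dot (- v) u = - dot v u.
Proof. by rewrite dotC dotNr dotC. Qed.

Lemma dotBl k (u v w : 'cV[R]_k) : dot (v - w) u = dot v u - dot w u.
Proof. by rewrite dotDl dotNl. Qed.

Lemma dotZl k a (u v : 'cV[R]_k) : dot (a *: v) u = a * dot v u.
Proof. by rewrite dotC dotZr dotC. Qed.

Lemma dot0l k (u : 'cV[R]_k) : dot 0 u = 0.
Proof. by rewrite dotC dot0r. Qed.

Lemma dot_mulmxl p q (M : 'M[R]_(p, q)) u v : dot (M *m u) v = dot u (M^T *m v).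
Proof.
have dotE k (a b : 'cV[R]_k) : dot a b = (a^T *m b) 0 0.
  by rewrite mxE; apply: eq_bigr => i _; rewrite mxE.
by rewrite !dotE trmx_mul mulmxA.
Qed.

Lemma dotvv_ge0 k (u : 'cV[R]_k) : 0 <= dot u u.
Proof. by apply: sumr_ge0 => i _; rewrite -expr2 sqr_ge0. Qed.

Lemma dotvv_eq0 k (u : 'cV[R]_k) : dot u u = 0 -> u = 0.
Proof.
move=> /eqP; rewrite psumr_eq0 => [/allP uu0|i _]; last by rewrite -expr2 sqr_ge0.
apply/matrixP => i j; rewrite (ord1 j) mxE.
by move: (uu0 i (mem_index_enum _)); rewrite /= mulf_eq0 orbb => /eqP.
Qed.

Lemma enorm_ge0 k (u : 'cV[R]_k) : 0 <= enorm u.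
Proof. exact: sqrtr_ge0. Qed.

Lemma enorm_sqr k (u : 'cV[R]_k) : enorm u ^+ 2 = dot u u.
Proof.
rewrite sqr_sqrtr; last by apply: sumr_ge0 => i _; rewrite sqr_ge0.
by apply: eq_bigr => i _; rewrite expr2.
Qed.

Lemma enorm_eq0 k (u : 'cV[R]_k) : enorm u = 0 -> u = 0.
Proof. by move=> u0; apply: dotvv_eq0; rewrite -enorm_sqr u0 expr0n. Qed.

Lemma enorm0 k : enorm (0 : 'cV[R]_k) = 0.
Proof. by rewrite /enorm big1 ?sqrtr0 // => i _; rewrite mxE expr0n. Qed.

Lemma enormN k (u : 'cV[R]_k) : enorm (- u) = enorm u.
Proof. by rewrite /enorm; congr Num.sqrt; apply: eq_bigr => i _; rewrite mxE sqrrN. Qed.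

Lemma dot_le_enorm k (u v : 'cV[R]_k) : dot u v <= enorm u * enorm v.
Proof.
have [/enorm_eq0 ->|u0] := eqVneq (enorm u) 0; first by rewrite dot0l enorm0 mul0r.
have [/enorm_eq0 ->|v0] := eqVneq (enorm v) 0; first by rewrite dot0r enorm0 mulr0.
have a_gt0 : 0 < enorm u by rewrite lt0r u0 enorm_ge0.
have b_gt0 : 0 < enorm v by rewrite lt0r v0 enorm_ge0.
(* expand 0 <= |b u - a v|^2 with a = |u|, b = |v| *)
have := dotvv_ge0 (enorm v *: u - enorm u *: v).
rewrite !(dotBl, dotBr, dotZl, dotZr) (dotC v u) -!enorm_sqr.
have := mulr_gt0 a_gt0 b_gt0; nra.
Qed.

Lemma dot_ge_Nenorm k (u v : 'cV[R]_k) : - (enorm u * enorm v) <= dot u v.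
Proof.
by rewrite lerNl -dotNl -(enormN u) dot_le_enorm.
Qed.

Lemma enorm_addr_sqr k (u v : 'cV[R]_k) :
  enorm (u + v) ^+ 2 = enorm u ^+ 2 + 2 * dot u v + enorm v ^+ 2.
Proof. by rewrite !enorm_sqr !(dotDl, dotDr) (dotC v u); ring. Qed.

Lemma ler_enormD k (u v : 'cV[R]_k) : enorm (u + v) <= enorm u + enorm v.
Proof.
rewrite -(ler_pXn2r (n := 2)) ?nnegrE ?addr_ge0 ?enorm_ge0 // enorm_addr_sqr.
have := dot_le_enorm u v; lra.
Qed.

Lemma ler_enormB k (u v : 'cV[R]_k) : enorm (u - v) <= enorm u + enorm v.
Proof. by rewrite -(enormN v) ler_enormD. Qed.

Lemma enormZ k a (u : 'cV[R]_k) : enorm (a *: u) = `|a| * enorm u.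
Proof.
rewrite -sqrtr_sqr -sqrtrM ?sqr_ge0 //; congr Num.sqrt; rewrite mulr_sumr.
by apply: eq_bigr => i _; rewrite mxE exprMn.
Qed.

Lemma enorm_convex k (c a b : 'cV[R]_k) (rho t : R) : 0 <= t <= 1 ->
  enorm (a - c) <= rho -> enorm (b - c) <= rho ->
  enorm (t *: (b - a) + a - c) <= rho.
Proof.
move=> /andP [t_ge0 t_le1] ac bc.
have -> : t *: (b - a) + a - c = t *: (b - c) + (1 - t) *: (a - c).
  rewrite scalerBl scale1r !scalerBr; apply/matrixP => i j; rewrite !mxE; ring.
apply: (le_trans (ler_enormD _ _)); rewrite !enormZ !ger0_norm ?subr_ge0 //.
nra.
Qed.

End EuclideanNorm.

Section OperatorBound.
Variable R : realType.

Definition op_bounded p q (M : 'M[R]_(p, q)) (c : R) :=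
  forall v, enorm (M *m v) <= c * enorm v.

Lemma specnorm_op_bounded p q (M : 'M[R]_(p, q)) : op_bounded M (specnorm M).
Proof.
set S := [set enorm (M *m v) | v in [set v : 'cV[R]_q | enorm v <= 1]].
have S_ub : has_ubound S.
  exists (Num.sqrt (\sum_(i < p) (\sum_(j < q) `|M i j|) ^+ 2)).
  move=> _ [v /= v_le1 <-]; rewrite ler_sqrt; last first.
    by apply: sumr_ge0 => i _; rewrite sqr_ge0.
  apply: ler_sum => i _; rewrite mxE -real_normK ?num_real //.
  rewrite ler_pXn2r ?nnegrE ?sumr_ge0 //.
  apply: (le_trans (ler_norm_sum _ _ _)); apply: ler_sum => j _.
  have vj_le1 : v j 0 ^+ 2 <= 1.
    apply: le_trans (_ : enorm v ^+ 2 <= 1); last by rewrite expr_le1 ?enorm_ge0.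
    rewrite enorm_sqr /dot (bigD1 j) //= -expr2 lerDl.
    by apply: sumr_ge0 => l _; rewrite -expr2 sqr_ge0.
  by rewrite normrM ler_piMr // -(expr_le1 (n := 2)) // real_normK ?num_real.
move=> v; have [/enorm_eq0 ->|v0] := eqVneq (enorm v) 0.
  by rewrite mulmx0 !enorm0 mulr0.
have v_gt0 : 0 < enorm v by rewrite lt0r v0 enorm_ge0.
have Mv_in : S (enorm (M *m ((enorm v)^-1 *: v))).
  exists ((enorm v)^-1 *: v) => //=.
  by rewrite enormZ ger0_norm ?invr_ge0 ?enorm_ge0 // mulVf.
have := ub_le_sup S_ub Mv_in.
by rewrite -scalemxAr enormZ ger0_norm ?invr_ge0 ?enorm_ge0 // ler_pdivrMl // mulrC.
Qed.

Lemma op_bounded_le p q (M : 'M[R]_(p, q)) c c' :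
  c <= c' -> op_bounded M c -> op_bounded M c'.
Proof. by move=> cc' Mc v; apply: le_trans (Mc v) (ler_wpM2r (enorm_ge0 v) cc'). Qed.

Lemma op_boundedN p q (M : 'M[R]_(p, q)) c : op_bounded M c -> op_bounded (- M) c.
Proof. by move=> Mc v; rewrite mulNmx enormN. Qed.

Lemma op_boundedD p q (M1 M2 : 'M[R]_(p, q)) c1 c2 :
  op_bounded M1 c1 -> op_bounded M2 c2 -> op_bounded (M1 + M2) (c1 + c2).
Proof.
by move=> M1c M2c v; rewrite mulmxDl mulrDl (le_trans (ler_enormD _ _)) ?lerD.
Qed.

Lemma op_boundedM p q r (M1 : 'M[R]_(p, q)) (M2 : 'M[R]_(q, r)) c1 c2 :
  0 <= c1 -> op_bounded M1 c1 -> op_bounded M2 c2 -> op_bounded (M1 *m M2) (c1 * c2).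
Proof.
move=> c1_ge0 M1c M2c v; rewrite -mulmxA -mulrA.
exact: le_trans (M1c _) (ler_wpM2l c1_ge0 (M2c v)).
Qed.

Lemma op_bounded_tr p q (M : 'M[R]_(p, q)) c :
  0 <= c -> op_bounded M c -> op_bounded M^T c.
Proof.
move=> c_ge0 Mc u; have [->|w0] := eqVneq (enorm (M^T *m u)) 0.
  by rewrite mulr_ge0 ?enorm_ge0.
have w_gt0 : 0 < enorm (M^T *m u) by rewrite lt0r w0 enorm_ge0.
rewrite -(ler_pM2r w_gt0) -expr2 enorm_sqr -dot_mulmxl dotC -mulrA mulrCA.
exact: le_trans (dot_le_enorm _ _) (ler_wpM2l (enorm_ge0 u) (Mc _)).
Qed.

Lemma enorm_sub_mulmx_tr_le p q (B : 'M[R]_(p, q)) (v : 'cV[R]_p) :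
  op_bounded B 1 -> enorm (v - B *m (B^T *m v)) <= enorm v.
Proof.
move=> B1; rewrite -(ler_pXn2r (n := 2)) ?nnegrE ?enorm_ge0 //.
set x := B^T *m v.
have vBx : dot v (B *m x) = enorm x ^+ 2 by rewrite dotC dot_mulmxl enorm_sqr.
rewrite enorm_sqr !(dotBl, dotBr) vBx dot_mulmxl -/x -!enorm_sqr.
have := B1 x; rewrite mul1r; have := enorm_ge0 (B *m x); nra.
Qed.

End OperatorBound.

Section MeanValue.
Variable R : realType.

Lemma cvg_dot (U : Type) (F : set_system U) (FF : Filter F) k
    (q : U -> 'cV[R]_k) (L c : 'cV[R]_k) :
  q @ F --> L -> (fun h => dot c (q h)) @ F --> dot c L.
Proof.
move=> qL; apply: cvg_big => [|i _]; first exact: add_continuous.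
apply: cvgM; first exact: cvg_cst.
exact: continuous_cvg _ (@coord_continuous R k 1 i 0 L) qL.
Qed.

Variables (N n : nat) (f : 'cV[R]_N -> 'cV[R]_n) (Jf : 'cV[R]_N -> 'M[R]_(n, N)).
Hypothesis f_diff : forall th, differentiable f th.
Hypothesis df_Jf : forall th h, 'd f th h = Jf th *m h.

Lemma is_derive_dot_line (c : 'cV[R]_n) (th D : 'cV[R]_N) (t0 : R) :
  is_derive t0 1 (fun t : R => dot c (f (t *: D + th)))
    (dot c (Jf (t0 *: D + th) *m D)).
Proof.
set g := fun t : R => f (t *: D + th).
have g_quot : (fun h : R => h^-1 *: ((g \o shift t0) (h *: 1) - g t0)) =
    (fun h : R => h^-1 *: ((f \o shift (t0 *: D + th)) (h *: D) - f (t0 *: D + th))).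
  by apply: funext => h /=; rewrite /g [h%:A]mulr1 scalerDl addrA.
have g_cvg : (fun h : R => h^-1 *: ((g \o shift t0) (h *: 1) - g t0)) @ 0^'
    --> Jf (t0 *: D + th) *m D.
  by rewrite g_quot -df_Jf -deriveE //; exact: diff_derivable.
have dot_quot : (fun h : R => h^-1 *: (((fun t => dot c (g t)) \o shift t0) (h *: 1)
      - dot c (g t0))) =
    (fun h => dot c (h^-1 *: ((g \o shift t0) (h *: 1) - g t0))).
  by apply: funext => h /=; rewrite dotZr dotBr.
have := cvg_dot (c := c) _ g_cvg; rewrite -dot_quot => dot_cvg.
split; first by apply/cvg_ex; eexists; exact: dot_cvg.
by rewrite /derive; apply: cvg_lim => //; exact: dot_cvg.
Qed.

Lemma mean_value_dot_le (c : 'cV[R]_n) (th D : 'cV[R]_N) (K : 'M[R]_(n, N)) (b : R) :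
  (forall t : R, 0 <= t <= 1 -> dot c ((Jf (t *: D + th) - K) *m D) <= b) ->
  dot c (f (D + th) - f th - K *m D) <= b.
Proof.
move=> dphi_le.
pose k := dot c (K *m D).
pose phi := (fun t : R => dot c (f (t *: D + th))) - k \*: (@id R).
have dphi (t : R) : is_derive t 1 phi (dot c (Jf (t *: D + th) *m D) - k *: 1).
  exact/is_deriveB/is_derive_dot_line.
have -> : dot c (f (D + th) - f th - K *m D) = phi 1 - phi 0.
  rewrite /phi !fctE /= scale1r scale0r add0r !dotBr /k scaler0 [_ *: 1]mulr1.
  by rewrite subr0 addrAC.
have [t0 t0_in ->] := @MVT_segment R phi
    (fun t => dot c (Jf (t *: D + th) *m D) - k *: 1) 0 1 ler01
    (fun t _ => dphi t)
    (derivable_within_continuous (fun t _ => @ex_derive _ _ _ _ _ _ _ (dphi t))).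
by rewrite subr0 mulr1 [_ *: 1]mulr1 /k -dotBr -mulmxBl; apply: dphi_le.
Qed.

Lemma mean_value_le m (A : 'M[R]_(m, n)) (th D : 'cV[R]_N) (K : 'M[R]_(n, N)) (b : R) :
  0 <= b ->
  (forall t : R, 0 <= t <= 1 -> op_bounded (A *m (Jf (t *: D + th) - K)) b) ->
  enorm (A *m (f (D + th) - f th - K *m D)) <= b * enorm D.
Proof.
move=> b_ge0 Jb; set w := A *m _.
have [->|w0] := eqVneq (enorm w) 0; first by rewrite mulr_ge0 ?enorm_ge0.
have w_gt0 : 0 < enorm w by rewrite lt0r w0 enorm_ge0.
rewrite -(ler_pM2l w_gt0) -expr2 enorm_sqr {1}/w dot_mulmxl dotC.
apply: mean_value_dot_le => t t01.
rewrite dotC -dot_mulmxl dotC mulmxA.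
exact: le_trans (dot_le_enorm _ _) (ler_wpM2l (enorm_ge0 w) (Jb t t01 D)).
Qed.

End MeanValue.

Section Arithmetic.
Variable R : realType.

Lemma growth_factor_step (e s : R) : 0 <= s -> (s + 1) * e ^+ 2 <= 1 / 2 ->
  (1 + e ^+ 2) * (1 + s * e ^+ 2 + s ^+ 2 * e ^+ 4) <=
  1 + (s + 1) * e ^+ 2 + (s + 1) ^+ 2 * e ^+ 4.
Proof.
move=> s_ge0 se_le.
have e2_ge0 : 0 <= e ^+ 2 := sqr_ge0 e.
have -> : e ^+ 4 = e ^+ 2 * e ^+ 2 by rewrite -exprD.
have sse : 0 <= s + 1 - s * (s * e ^+ 2).
  have : s * (s * e ^+ 2) <= s * (1 / 2) by apply: ler_wpM2l => //; nra.
  lra.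
have := mulr_ge0 (mulr_ge0 e2_ge0 e2_ge0) sse.
nra.
Qed.

Lemma growth_factor_le (e s : R) : 0 <= s -> s * e ^+ 2 <= 1 / 2 ->
  1 + s * e ^+ 2 + s ^+ 2 * e ^+ 4 <= 16 / 9.
Proof.
move=> s_ge0 se_le; have se_ge0 : 0 <= s * e ^+ 2 by rewrite mulr_ge0 ?sqr_ge0.
have -> : s ^+ 2 * e ^+ 4 = (s * e ^+ 2) ^+ 2 by rewrite exprMn -exprM.
nra.
Qed.

Lemma sqr_addr_le (P Q a s : R) : 0 <= s -> 0 <= Q -> P ^+ 2 <= s * Q ->
  (P + a) ^+ 2 <= (s + 1) * (Q + a ^+ 2).
Proof.
move=> s_ge0 Q_ge0 PQ.
suff cross : 2 * P * a <= Q + s * a ^+ 2 by nra.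
have [s0|s_gt0] := eqVneq s 0.
  have P0 : P = 0 by move: PQ; rewrite s0 mul0r; nra.
  by rewrite P0 s0 !mul0r; lra.
have s_pos : 0 < s by rewrite lt0r s_gt0.
rewrite -(ler_pM2l s_pos); have := sqr_ge0 (P - s * a); nra.
Qed.

Lemma sqr_sum_le (a : nat -> R) (s : nat) :
  (\sum_(i < s) a i) ^+ 2 <= s%:R * \sum_(i < s) a i ^+ 2.
Proof.
elim: s => [|s IH]; first by rewrite !big_ord0 expr0n mul0r.
rewrite !big_ord_recr /= -natr1; apply: sqr_addr_le => //.
by apply: sumr_ge0 => i _; rewrite sqr_ge0.
Qed.

Lemma half_radius_bound (s T : nat) (P Q e rho Rad : R) : (s <= T)%N ->
  0 <= e -> 0 <= rho -> 0 <= P -> P ^+ 2 <= s%:R * Q ->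
  Q <= rho ^+ 2 * (1 + 4 * e * s%:R) ->
  2 * rho * (Num.sqrt T%:R + 2 * e * T%:R ^+ 2) <= Rad -> P <= Rad / 2.
Proof.
move=> sT e_ge0 rho_ge0 P_ge0 PQ Q_le R_ge.
set t : R := T%:R; set q := Num.sqrt t.
have st : s%:R <= t by rewrite ler_nat.
have s_ge0 : 0 <= s%:R :> R by [].
have q_ge0 : 0 <= q := sqrtr_ge0 t.
have qq : q ^+ 2 = t by rewrite sqr_sqrtr.
(* [t^2 <= t^2 sqrt t] because the natural number [t] is either 0 or at least 1 *)
have ttq : t ^+ 2 <= t ^+ 2 * q.
  have [T0|T_gt0] := posnP T; first by rewrite /t T0 expr0n !mul0r.
  have t_ge1 : 1 <= t by rewrite ler1n.
  have q_ge1 : 1 <= q by nra.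
  by rewrite ler_peMr ?sqr_ge0.
have rho2_ge0 : 0 <= rho ^+ 2 := sqr_ge0 rho.
have PQt : P ^+ 2 <= t * (rho ^+ 2 * (1 + 4 * e * t)).
  apply: le_trans PQ _; apply: le_trans (ler_wpM2l s_ge0 Q_le) _.
  rewrite mulrCA [t * _]mulrCA; apply: ler_wpM2l => //.
  have : e * (s%:R * s%:R) <= e * (t * t) by apply: ler_wpM2l => //; nra.
  nra.
have Pt : P ^+ 2 <= (rho * (q + 2 * e * t ^+ 2)) ^+ 2.
  apply: le_trans PQt _.
  have -> : (rho * (q + 2 * e * t ^+ 2)) ^+ 2 =
      rho ^+ 2 * (t + 4 * e * (t ^+ 2 * q) + 4 * e ^+ 2 * t ^+ 4).
    by rewrite -qq; ring.
  rewrite mulrCA; apply: ler_wpM2l => //.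
  have : e * t ^+ 2 <= e * (t ^+ 2 * q) by apply: ler_wpM2l.
  have : 0 <= e ^+ 2 * t ^+ 4 by rewrite mulr_ge0 ?exprn_ge0.
  nra.
apply: (@le_trans _ _ (rho * (q + 2 * e * t ^+ 2))).
  rewrite -(ler_pXn2r (n := 2)) // nnegrE mulr_ge0 // addr_ge0 //.
  by rewrite !mulr_ge0 ?exprn_ge0.
by rewrite ler_pdivlMr // mulrC mulrA.
Qed.

End Arithmetic.

Definition gd_dir (R : realType) (N n m : nat) (f : 'cV[R]_N -> 'cV[R]_n)
    (Jf : 'cV[R]_N -> 'M[R]_(n, N)) (A : 'M[R]_(m, n)) (y : 'cV[R]_m)
    (th : 'cV[R]_N) : 'cV[R]_N :=
  (A *m Jf th)^T *m resid f A y th.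

Section GradientStep.
Variables (R : realType) (N n m : nat) (f : 'cV[R]_N -> 'cV[R]_n).
Variables (Jf : 'cV[R]_N -> 'M[R]_(n, N)) (A : 'M[R]_(m, n)) (y : 'cV[R]_m).
Variables (th0 : 'cV[R]_N) (J : 'M[R]_(n, N)) (eps Rad : R).
Hypothesis f_diff : forall th, differentiable f th.
Hypothesis df_Jf : forall th h, 'd f th h = Jf th *m h.
Hypothesis A_le1 : op_bounded A 1.
Hypothesis J_le1 : op_bounded J 1.
Hypothesis Jf_le1 : forall th, op_bounded (Jf th) 1.
Hypothesis Jf0_J : op_bounded (Jf th0 - J) eps.
Hypothesis Jf_Jf0 :
  forall th, enorm (th - th0) <= Rad -> op_bounded (Jf th - Jf th0) (eps / 2).
Hypothesis eps_gt0 : 0 < eps.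

Local Notation r := (resid f A y).
Local Notation z := (gd_dir f Jf A y).
Local Notation B := (A *m J).

Let eps_ge0 : 0 <= eps. Proof. exact: ltW. Qed.
Let eps2_ge0 : 0 <= eps / 2. Proof. by rewrite divr_ge0. Qed.

Lemma op_bounded_mulA p (M : 'M[R]_(n, p)) c :
  0 <= c -> op_bounded M c -> op_bounded (A *m M) c.
Proof. by move=> c_ge0 Mc; rewrite -[c]mul1r; apply: op_boundedM. Qed.

Lemma op_bounded_AJ_sub_AJf0 : op_bounded (B - A *m Jf th0) eps.
Proof.
rewrite -mulmxBr -opprB mulmxN; apply/op_boundedN/op_bounded_mulA => //.
Qed.

Lemma op_bounded_AJf0_sub_AJf th : enorm (th - th0) <= Rad ->
  op_bounded (A *m Jf th0 - A *m Jf th)^T (eps / 2).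
Proof.
move=> th_in; apply: op_bounded_tr => //.
rewrite -mulmxBr -opprB mulmxN; apply/op_boundedN/op_bounded_mulA => //.
exact: Jf_Jf0.
Qed.

Lemma op_bounded_AJ_sub_AJf th : enorm (th - th0) <= Rad ->
  op_bounded (B - A *m Jf th)^T (eps / 2 + eps).
Proof.
move=> th_in; apply: op_bounded_tr; first by rewrite addr_ge0.
have -> : B - A *m Jf th = - (A *m ((Jf th - Jf th0) + (Jf th0 - J))).
  by rewrite addrA subrK mulmxBr opprB.
apply/op_boundedN/op_bounded_mulA; first by rewrite addr_ge0.
by apply: op_boundedD => //; exact: Jf_Jf0.
Qed.

Lemma enorm_gd_dir_le th : enorm (z th) <= enorm (r th).
Proof.
rewrite -[X in _ <= X]mul1r; apply: op_bounded_tr => //.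
exact: op_bounded_mulA.
Qed.

Lemma enorm_resid_sub_le th D : enorm (r (D + th) - r th) <= enorm D.
Proof.
have -> : r (D + th) - r th = A *m (f (D + th) - f th - 0 *m D).
  by rewrite mul0mx subr0 mulmxBr /resid opprB addrA subrK.
rewrite -[X in _ <= X]mul1r; apply: mean_value_le => // t _.
by rewrite subr0; exact: op_bounded_mulA.
Qed.

Lemma resid_gd_step th : enorm (th - th0) <= Rad -> enorm (th - z th - th0) <= Rad ->
  exists2 v, enorm v <= eps / 2 * enorm (z th) &
    r (th - z th) = r th + v - A *m Jf th0 *m z th.
Proof.
move=> th_in next_in; set D := - z th.
exists (A *m (f (D + th) - f th - Jf th0 *m D)).
  rewrite -(enormN (z th)) -/D; apply: mean_value_le => // t t01.
  apply: op_bounded_mulA => //; apply: Jf_Jf0.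
  by have := enorm_convex (b := D + th) t01 th_in; rewrite addrK (addrC D); apply.
rewrite /resid /D (addrC th) mulmxN !mulmxBr mulmxN !mulmxA.
by apply/matrixP => i j; rewrite !mxE; ring.
Qed.

Lemma enorm_resid_gd_step_sqr th :
  enorm (th - th0) <= Rad -> enorm (th - z th - th0) <= Rad ->
  enorm (r (th - z th)) ^+ 2 <=
    enorm (r th) ^+ 2 - enorm (z th) ^+ 2 + 2 * eps * enorm (r th) * enorm (z th).
Proof.
move=> th_in next_in; have [v v_le r_next] := resid_gd_step th_in next_in.
have u_le : enorm (r (th - z th) - r th) <= enorm (z th).
  by rewrite -(enormN (z th)) (addrC th); apply: enorm_resid_sub_le.
rewrite r_next -addrA; move: u_le; rewrite r_next addrAC [r th + v]addrC addrK.
set rr := r th; set x := z th; set B0 := A *m Jf th0; set B2 := A *m Jf th.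
set u := v - B0 *m x => u_le.
have u_sqr : enorm u ^+ 2 <= enorm x ^+ 2 by rewrite ler_pXn2r ?nnegrE ?enorm_ge0.
(* the descent term: [<r, B0 x> = |x|^2 + <(B0 - B2)^T r, x>] because [x = B2^T r] *)
have descent : dot rr (B0 *m x) = enorm x ^+ 2 + dot ((B0 - B2)^T *m rr) x.
  have trB : (B0 - B2)^T = B0^T - B2^T by rewrite linearB.
  by rewrite dotC dot_mulmxl dotC enorm_sqr trB mulmxBl dotBl addrC subrK.
have rv : dot rr v <= enorm rr * (eps / 2 * enorm x).
  exact: le_trans (dot_le_enorm rr v) (ler_wpM2l (enorm_ge0 rr) v_le).
have mismatch : - dot ((B0 - B2)^T *m rr) x <= eps / 2 * enorm rr * enorm x.
  rewrite lerNl; apply: le_trans (dot_ge_Nenorm _ _); rewrite lerN2.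
  apply: ler_wpM2r; [exact: enorm_ge0 | exact: (op_bounded_AJf0_sub_AJf th_in rr)].
rewrite enorm_addr_sqr /u dotBr descent; lra.
Qed.

Lemma resid_lin_gd_step_le th (rt : 'cV[R]_m) :
  enorm (th - th0) <= Rad -> enorm (th - z th - th0) <= Rad ->
  enorm (rt - B *m (B^T *m rt) - r (th - z th)) <=
    enorm (rt - r th) + 3 * eps * enorm (r th).
Proof.
move=> th_in next_in; have [v v_le ->] := resid_gd_step th_in next_in.
have x_le := enorm_gd_dir_le th.
set rr := r th; set x := z th; set B0 := A *m Jf th0; set B2 := A *m Jf th.
have x_def : x = B2^T *m rr by [].
have -> : rt - B *m (B^T *m rt) - (rr + v - B0 *m x) =
    (rt - rr) - B *m (B^T *m (rt - rr)) - (v + (B - B0) *m x + B *m ((B - B2)^T *m rr)).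
  have trB : (B - B2)^T = B^T - B2^T by rewrite linearB.
  rewrite trB !mulmxBl -x_def !mulmxBr.
  by apply/matrixP => i j; rewrite !mxE; ring.
have B_le1 : op_bounded B 1 by exact: op_bounded_mulA.
have lin_contr := enorm_sub_mulmx_tr_le (rt - rr) B_le1.
have Bx_le := op_bounded_AJ_sub_AJf0 x.
have BB2_le := B_le1 ((B - B2)^T *m rr); rewrite mul1r in BB2_le.
have B2_le := op_bounded_AJ_sub_AJf th_in rr.
have ex_le : eps * enorm x <= eps * enorm rr by exact: ler_wpM2l.
apply: (le_trans (ler_enormB _ _)); apply: lerD => //.
apply: (le_trans (ler_enormD _ _)); apply: le_trans (lerD (ler_enormD _ _) BB2_le) _.
lra.
Qed.

Lemma gd_lin_step_le th (tth : 'cV[R]_N) (rt : 'cV[R]_m) :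
  enorm (th - th0) <= Rad ->
  enorm (tth - B^T *m rt - (th - z th)) <=
    enorm (tth - th) + enorm (rt - r th) + 3 * eps / 2 * enorm (r th).
Proof.
move=> th_in; set rr := r th; set B2 := A *m Jf th.
have -> : tth - B^T *m rt - (th - z th) =
    (tth - th) - B^T *m (rt - rr) - (B - B2)^T *m rr.
  have trB : (B - B2)^T = B^T - B2^T by rewrite linearB.
  rewrite trB mulmxBl mulmxBr /gd_dir -/rr -/B2.
  by apply/matrixP => i j; rewrite !mxE; ring.
have BT_le := op_bounded_tr ler01 (op_bounded_mulA ler01 J_le1) (rt - rr).
have B2_le := op_bounded_AJ_sub_AJf th_in rr.
apply: (le_trans (ler_enormB _ _)); apply: le_trans (lerD (ler_enormB _ _) B2_le) _.
lra.
Qed.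

End GradientStep.

Section GradientDescent.
Variables (R : realType) (N n m : nat) (f : 'cV[R]_N -> 'cV[R]_n).
Variables (Jf : 'cV[R]_N -> 'M[R]_(n, N)) (A : 'M[R]_(m, n)) (y : 'cV[R]_m).
Variables (th0 : 'cV[R]_N) (J : 'M[R]_(n, N)) (eps Rad : R) (T : nat).
Hypothesis f_diff : forall th, differentiable f th.
Hypothesis df_Jf : forall th h, 'd f th h = Jf th *m h.
Hypothesis A_le1 : op_bounded A 1.
Hypothesis J_le1 : op_bounded J 1.
Hypothesis Jf_le1 : forall th, op_bounded (Jf th) 1.
Hypothesis Jf0_J : op_bounded (Jf th0 - J) eps.
Hypothesis Jf_Jf0 :
  forall th, enorm (th - th0) <= Rad -> op_bounded (Jf th - Jf th0) (eps / 2).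
Hypothesis eps_gt0 : 0 < eps.
Hypothesis T_eps : T%:R * eps ^+ 2 <= 1 / 2.
Hypothesis Rad_ge :
  2 * enorm (resid f A y th0) * (Num.sqrt T%:R + 2 * eps * T%:R ^+ 2) <= Rad.

Local Notation th := (gd_iter f Jf A y 1 th0).
Local Notation tth := (gd_lin_iter f J A y 1 th0).
Local Notation r s := (resid f A y (th s)).
Local Notation rt s := (resid_lin f J A y th0 (tth s)).
Local Notation z s := (gd_dir f Jf A y (th s)).
Local Notation B := (A *m J).
Local Notation rho := (enorm (resid f A y th0)).

Lemma gd_iterS s : th s.+1 = th s - z s.
Proof. by rewrite /= scale1r /gd_dir trmx_mul. Qed.

Lemma gd_lin_iterS s : tth s.+1 = tth s - B^T *m rt s.
Proof. by rewrite /= scale1r trmx_mul. Qed.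

Lemma resid_lin_iterS s : rt s.+1 = rt s - B *m (B^T *m rt s).
Proof.
rewrite gd_lin_iterS /resid_lin !mulmxBr !mulmxA.
by apply/matrixP => i j; rewrite !mxE; ring.
Qed.

Lemma gd_iter_dist_le s : enorm (th s - th0) <= \sum_(i < s) enorm (z i).
Proof.
elim: s => [|s IH]; first by rewrite big_ord0 subrr enorm0.
rewrite big_ord_recr gd_iterS addrAC.
exact: le_trans (ler_enormB _ _) (lerD IH (lexx _)).
Qed.

Lemma gd_iter_half_ball s : (s <= T)%N ->
  \sum_(i < s) enorm (z i) ^+ 2 <= rho ^+ 2 * (1 + 4 * eps * s%:R) ->
  enorm (th s - th0) <= Rad / 2.
Proof.
move=> sT sum_le; apply: le_trans (gd_iter_dist_le s) _.
apply: half_radius_bound sT (ltW eps_gt0) (enorm_ge0 _) _ (sqr_sum_le (fun i => enorm (z i)) s) sum_le Rad_ge.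
by apply: sumr_ge0 => i _; exact: enorm_ge0.
Qed.

Lemma gd_iter_step_ball s : (s < T)%N ->
  \sum_(i < s) enorm (z i) ^+ 2 + enorm (r s) ^+ 2 <= rho ^+ 2 * (1 + 4 * eps * s%:R) ->
  enorm (th s - th0) <= Rad /\ enorm (th s - z s - th0) <= Rad.
Proof.
move=> sT sum_le.
have Rad_ge0 : 0 <= Rad.
  apply: le_trans Rad_ge; rewrite mulr_ge0 ?addr_ge0 ?sqrtr_ge0 ?mulr_ge0 ?enorm_ge0 //.
  exact: ltW.
have half_le : Rad / 2 <= Rad by lra.
have rho2_ge0 : 0 <= rho ^+ 2 := sqr_ge0 _.
split; apply: le_trans _ half_le.
  apply: gd_iter_half_ball; first exact: ltnW.
  by apply: le_trans sum_le; rewrite lerDl sqr_ge0.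
rewrite -gd_iterS; apply: gd_iter_half_ball => //.
rewrite big_ord_recr /=; apply: (@le_trans _ _ (rho ^+ 2 * (1 + 4 * eps * s%:R))).
  apply: le_trans sum_le; rewrite lerD2l ler_pXn2r ?nnegrE ?enorm_ge0 //.
  exact: enorm_gd_dir_le.
rewrite ler_wpM2l // lerD2l ler_wpM2l ?ler_nat ?mulr_ge0 //; exact: ltW.
Qed.

(* [1 + s eps^2 + s^2 eps^4] stands in for [(1 + eps^2)^s]. *)
Lemma gd_invariant s : (s <= T)%N ->
  [/\ enorm (r s) ^+ 2 <= (1 + s%:R * eps ^+ 2 + s%:R ^+ 2 * eps ^+ 4) * rho ^+ 2,
      \sum_(i < s) enorm (z i) ^+ 2 + enorm (r s) ^+ 2 <= rho ^+ 2 * (1 + 4 * eps * s%:R),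
      enorm (rt s - r s) <= 4 * eps * s%:R * rho &
      enorm (tth s - th s) <= 2 * eps * s%:R ^+ 2 * rho].
Proof.
have rho_ge0 : 0 <= rho := enorm_ge0 _.
have eps_ge0 : 0 <= eps := ltW eps_gt0.
elim: s => [_|s IH sT].
  have -> : rt 0 = r 0 by rewrite /resid_lin subrr !mulmx0 addr0.
  rewrite big_ord0 /= subrr enorm0 expr0n /= !(mul0r, mulr0, addr0, add0r, mul1r, mulr1).
  by rewrite subrr enorm0.
have [r_sqr_le sum_le rt_le tth_le] := IH (ltnW sT).
have [th_in next_in] := gd_iter_step_ball sT sum_le.
have s_ge0 : 0 <= s%:R :> R := ler0n _ _.
have sT_eps : (s%:R + 1) * eps ^+ 2 <= 1 / 2.
  by apply: le_trans T_eps; rewrite ler_wpM2r ?sqr_ge0 // natr1 ler_nat.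
have r_sqr_le16 : enorm (r s) ^+ 2 <= 16 / 9 * rho ^+ 2.
  apply: le_trans r_sqr_le _; rewrite ler_wpM2r ?sqr_ge0 //.
  by apply: growth_factor_le => //; apply: le_trans sT_eps; nra.
have r_le : enorm (r s) <= 4 / 3 * rho.
  by rewrite -(ler_pXn2r (n := 2)) ?nnegrE ?mulr_ge0 ?enorm_ge0 // exprMn; lra.
have x_le := enorm_gd_dir_le f y A_le1 Jf_le1 (th s).
have r_next := enorm_resid_gd_step_sqr f_diff df_Jf A_le1 Jf_le1 Jf_Jf0 eps_gt0 th_in next_in.
rewrite -gd_iterS in r_next.
have r_ge0 := enorm_ge0 (r s); have x_ge0 := enorm_ge0 (z s).
rewrite -natr1; split.
- apply: le_trans r_next _.
  apply: (@le_trans _ _ ((1 + eps ^+ 2) * enorm (r s) ^+ 2)).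
    by have := sqr_ge0 (enorm (z s) - eps * enorm (r s)); nra.
  have growth_ge0 : 0 <= 1 + eps ^+ 2 by rewrite addr_ge0 ?sqr_ge0.
  apply: le_trans (ler_wpM2l growth_ge0 r_sqr_le) _; rewrite mulrA ler_wpM2r ?sqr_ge0 //.
  exact: growth_factor_step.
- rewrite big_ord_recr /=.
  have : eps * (enorm (r s) * enorm (z s)) <= eps * (16 / 9 * rho ^+ 2).
    by rewrite ler_wpM2l //; apply: le_trans r_sqr_le16; rewrite expr2 ler_wpM2l.
  have := mulr_ge0 eps_ge0 (sqr_ge0 rho); nra.
- rewrite resid_lin_iterS gd_iterS.
  apply: le_trans (resid_lin_gd_step_le f_diff df_Jf A_le1 J_le1 Jf_le1 Jf0_J Jf_Jf0
    eps_gt0 (rt s) th_in next_in) _.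
  have := ler_wpM2l eps_ge0 r_le; lra.
- rewrite gd_lin_iterS gd_iterS.
  apply: le_trans (gd_lin_step_le f y A_le1 J_le1 Jf0_J Jf_Jf0 eps_gt0 (tth s) (rt s) th_in) _.
  have := ler_wpM2l eps_ge0 r_le; nra.
Qed.

Lemma gd_linearization_bounds s : (s <= T)%N ->
  [/\ enorm (th s - th0) <= Rad / 2,
      enorm (rt s - r s) <= 4 * eps * s%:R * rho &
      enorm (tth s - th s) <= 2 * eps * s%:R ^+ 2 * rho].
Proof.
move=> sT; have [_ sum_le rt_le tth_le] := gd_invariant sT.
split => //; apply: gd_iter_half_ball => //.
by apply: le_trans sum_le; rewrite lerDl sqr_ge0.
Qed.

End GradientDescent.

Unset Implicit Arguments.

Theorem corollary3p1 (R : realType) (N n m : nat)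
  (f : 'cV[R]_N -> 'cV[R]_n) (Jf : 'cV[R]_N -> 'M[R]_(n, N))
  (A : 'M[R]_(m, n)) (y : 'cV[R]_m) (th0 : 'cV[R]_N) (J : 'M[R]_(n, N))
  (eps Rad : R) (T : nat) :
  (forall th : 'cV[R]_N, differentiable f th) ->
  (forall th h : 'cV[R]_N, 'd f th h = Jf th *m h) ->
  continuous Jf ->
  specnorm A <= 1 ->
  specnorm J <= 1 -> (forall th, specnorm (Jf th) <= 1) ->
  specnorm (Jf th0 - J) <= eps ->
  specnorm (Jf th0 *m (Jf th0)^T - J *m J^T) <= eps ^+ 2 ->
  0 < eps -> 0 < Rad ->
  (forall th, enorm (th - th0) <= Rad -> specnorm (Jf th - Jf th0) <= eps / 2) ->
  eps <= 1 ->
  T%:R <= 1 / (2 * eps ^+ 2) ->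
  2 * enorm (resid f A y th0) * (Num.sqrt T%:R + 2 * eps * T%:R ^+ 2) <= Rad ->
  forall tau : nat, (tau <= T)%N ->
    let th := gd_iter f Jf A y 1 th0 in
    let tth := gd_lin_iter f J A y 1 th0 in
    [/\ enorm (th tau - th0) <= Rad / 2,
        enorm (resid_lin f J A y th0 (tth tau) - resid f A y (th tau))
          <= 4 * eps * tau%:R * enorm (resid f A y th0)
      & enorm (tth tau - th tau)
          <= 2 * eps * tau%:R ^+ 2 * enorm (resid f A y th0)].
Proof.
move=> f_diff df_Jf _ A_le1 J_le1 Jf_le1 Jf0_J _ eps_gt0 _ Jf_Jf0 _ T_le Rad_ge.
have op_le p q (M : 'M[R]_(p, q)) c : specnorm M <= c -> op_bounded M c.
  by move=> M_le; apply: op_bounded_le M_le (specnorm_op_bounded M).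
have T_eps : T%:R * eps ^+ 2 <= 1 / 2.
  move: T_le; rewrite ler_pdivlMr ?mulr_gt0 ?exprn_gt0 //; lra.
apply: gd_linearization_bounds T_eps Rad_ge => //.
- exact: op_le.
- exact: op_le.
- by move=> th; apply: op_le.
- exact: op_le.
- by move=> th th_in; apply/op_le/Jf_Jf0.
Qed.
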